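(* If $G$ is a triangle-free graph of order $n$, then $q_n(G)<2n/9$, where $q_n(G)$ is the smallest eigenvalue of the signless Laplacian of $G$.
   Context: Graphs are finite and simple. For a graph $G$ with adjacency matrix $A$ and diagonal degree matrix $D$, the signless Laplacian is $Q(G)=D+A$; $q_n(G)$ is its smallest eigenvalue. *)

From HB Require Import structures.
From mathcomp Require Import all_boot all_order all_algebra.
From mathcomp Require Import all_reals.
Set Implicit Arguments. Unset Strict Implicit. Unset Printing Implicit Defensive.
Import Order.TTheory GRing.Theory Num.Theory.
Local Open Scope ring_scope.

Definition simple_graph (n : nat) (e : rel 'I_n) : Prop :=
  (forall x y, e x y = e y x) /\ (forall x, ~~ e x x).

Definition triangle_free (n : nat) (e : rel 'I_n) : Prop :=
  ~ exists x y z, [&& e x y, e y z & e z x].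

Definition deg (n : nat) (e : rel 'I_n) (i : 'I_n) : nat := #|[set j | e i j]|.

Definition adjacency_mx (R : nzRingType) (n : nat) (e : rel 'I_n) : 'M[R]_n :=
  \matrix_(i, j) (e i j)%:R.

Definition degree_mx (R : nzRingType) (n : nat) (e : rel 'I_n) : 'M[R]_n :=
  diag_mx (\row_i (deg e i)%:R).

Definition signless_laplacian (R : nzRingType) (n : nat) (e : rel 'I_n) : 'M[R]_n :=
  degree_mx R e + adjacency_mx R e.

Definition smallest_eigenvalue (R : realFieldType) (n : nat) (M : 'M[R]_n) (a : R) : Prop :=
  eigenvalue M a /\ forall b, eigenvalue M b -> a <= b.

(* The smallest eigenvalue of the symmetric matrix Q bounds its Rayleigh quotient from below.
   Test it on the vector x which is 3 on the neighbourhood N(v) of a vertex v of maximum degree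
   Delta and -1 elsewhere.  As x'Qx is the sum of (x_i + x_j)^2 over the edges ij and no edge
   lies inside N(v), every edge contributes 4, so x'Qx = 4m, while |x|^2 = n + 8 Delta.  Hence
   q <= 4m / (n + 8 Delta), and 9 * 2m < n^2 + 8 n Delta follows from 2m <= n(n-1) and
   2m <= n Delta. *)
From HB Require Import structures.
From mathcomp Require Import all_boot all_order all_algebra.
From mathcomp Require Import all_reals.
From mathcomp Require Import complex.
From mathcomp Require Import ring lra.
Import Order.TTheory GRing.Theory Num.Theory.
Local Open Scope ring_scope.
Local Open Scope sesquilinear_scope.

Section NormalRayleigh.
Context {C : numClosedFieldType} {n : nat} {A : 'M[C]_n}.
Hypothesis A_normal : A \is normalmx.

Local Notation P := (spectralmx A).
Local Notation d := (spectral_diag A).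

Lemma spectral_decomposition : A = P^t* *m diag_mx d *m P.
Proof.
have := orthomx_spectralP A_normal.
by rewrite invmx_unitary ?spectral_unitarymx.
Qed.

Lemma spectral_diag_eigenvalue k : eigenvalue A (d 0 k).
Proof.
apply/eigenvalueP; exists (row k P).
  have PA : P *m A = diag_mx d *m P.
    rewrite [X in _ *m X]spectral_decomposition !mulmxA.
    by rewrite (unitarymxP (spectral_unitarymx A)) mul1mx.
  by rewrite -row_mul PA row_mul row_diag_mx -scalemxAl -rowE.
have := spectral_unit A; rewrite -row_free_unit => Pfree.
rewrite rowE mul_mx_rowfree_eq0 //.
by apply/eqP => /matrixP/(_ 0 k); rewrite !mxE !eqxx /= => /eqP; rewrite oner_eq0.
Qed.

Lemma normalmx_rayleigh_lower (a : C) (y : 'rV_n) :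
  (forall k, a <= d 0 k) -> a * (y *m y^t*) 0 0 <= (y *m A *m y^t*) 0 0.
Proof.
move=> a_le_d; pose z := y *m P^t*.
have zC : z^t* = P *m y^t* by rewrite /z trmx_mul map_mxM trmxCK.
have -> : y *m y^t* = z *m z^t*.
  by rewrite zC mulmxA mulmxKtV ?spectral_unitarymx.
have -> : y *m A *m y^t* = z *m diag_mx d *m z^t*.
  by rewrite zC [X in y *m X]spectral_decomposition !mulmxA.
rewrite mul_mx_diag !mxE mulr_sumr; apply: ler_sum => k _; rewrite !mxE.
rewrite mulrAC [a * _]mulrC ler_wpM2l ?a_le_d //.
by rewrite -normCK exprn_ge0.
Qed.

End NormalRayleigh.

Section SymmetricRayleigh.
Context {R : rcfType}.
Local Notation f := (@real_complex R).

Lemma symmetric_rayleigh_lower {n} {A : 'M[R]_n} {a : R} (x : 'rV_n) :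
  A^T = A -> (forall b, eigenvalue A b -> a <= b) ->
  a * (x *m x^T) 0 0 <= (x *m A *m x^T) 0 0.
Proof.
move=> A_sym a_min.
have f_real r : f r \is Num.real by rewrite complex_real.
have Af_herm : map_mx f A \is hermsymmx.
  apply: realsym_hermsym; last by apply/mxOverP => i j; rewrite mxE.
  apply/is_hermitianmxP; rewrite expr0 scale1r.
  by rewrite map_mx_id // map_trmx A_sym.
have xf_adj : (map_mx f x)^t* = map_mx f x^T.
  by apply/matrixP => i j; rewrite !mxE conj_Creal.
have fE (M : 'M[R]_1) : f (M 0 0) = map_mx f M 0 0 by rewrite mxE.
rewrite -lecR rmorphM /= !fE !map_mxM -xf_adj.
apply: normalmx_rayleigh_lower; first exact: hermitian_normalmx.
move=> k; have /complex_realP[r dr] := mxOverP (hermitian_spectral_diag_real Af_herm) 0 k.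
rewrite dr lecR; apply: a_min; rewrite -(eigenvalue_map f).
by have := spectral_diag_eigenvalue (hermitian_normalmx Af_herm) k; rewrite dr.
Qed.

End SymmetricRayleigh.

Section SignlessLaplacianForm.
Context (R : comNzRingType) {n : nat} {e : rel 'I_n}.
Hypothesis e_sym : forall x y, e x y = e y x.

Local Notation Q := (signless_laplacian R e).

Lemma deg_sum i : (deg e i)%:R = \sum_j ((e i j)%:R : R).
Proof.
rewrite /deg cardsE -sum1_card natr_sum big_mkcond /=.
by apply: eq_bigr => j _; rewrite -[j \in e i]/(e i j); case: (e i j).
Qed.

Lemma signless_laplacian_tr : Q^T = Q.
Proof.
rewrite /signless_laplacian linearD /= /degree_mx tr_diag_mx; congr (_ + _).
by apply/matrixP => i j; rewrite !mxE e_sym.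
Qed.

Lemma signless_laplacian_form (x : 'rV[R]_n) :
  2 * (x *m Q *m x^T) 0 0 = \sum_i \sum_j (e i j)%:R * (x 0 i + x 0 j) ^+ 2.
Proof.
have -> : (x *m Q *m x^T) 0 0 =
    \sum_j \sum_i (e i j)%:R * (x 0 j ^+ 2 + x 0 i * x 0 j).
  rewrite mulmxDr mul_mx_diag mulmxDl !mxE -big_split /=.
  apply: eq_bigr => j _; rewrite !mxE deg_sum mulr_sumr !mulr_suml -big_split /=.
  by apply: eq_bigr => i _; rewrite (e_sym j i) mxE; ring.
rewrite mulr2n mulrDl mul1r [X in X + _]exchange_big /= -big_split /=.
apply: eq_bigr => i _; rewrite -big_split /=.
by apply: eq_bigr => j _; rewrite (e_sym i j); ring.
Qed.

End SignlessLaplacianForm.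

Section StarVector.
Context (R : numFieldType) {n : nat} (e : rel 'I_n).
Hypotheses (e_sym : forall x y, e x y = e y x) (e_tf : triangle_free e).
Variable v : 'I_n.

Definition star_vector : 'rV[R]_n := \row_i (if e v i then 3 else -1).

Local Notation x := star_vector.

Lemma star_vector_norm : (x *m x^T) 0 0 = n%:R + 8 * (deg e v)%:R.
Proof.
rewrite mxE deg_sum mulr_sumr -[n in n%:R]card_ord -sumr_const -big_split /=.
by apply: eq_bigr => j _; rewrite !mxE; case: (e v j) => /=; ring.
Qed.

Lemma star_vector_form :
  (x *m signless_laplacian R e *m x^T) 0 0 = 2 * \sum_j (deg e j)%:R.
Proof.
apply: (@mulfI _ 2); first by rewrite pnatr_eq0.
rewrite signless_laplacian_form // !mulr_sumr; apply: eq_bigr => i _.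
rewrite deg_sum !mulr_sumr; apply: eq_bigr => j _; rewrite !mxE.
case e_ij: (e i j); last by rewrite /=; ring.
case e_vi: (e v i); case e_vj: (e v j) => /=; try ring.
by case: e_tf; exists v, i, j; rewrite e_vi e_ij e_sym e_vj.
Qed.

End StarVector.

Lemma deg_lt {n} {e : rel 'I_n} i : (forall x, ~~ e x x) -> (deg e i < n)%N.
Proof.
move=> e_irr; have sub : [set j | e i j] \subset [set~ i].
  by apply/subsetP => j; rewrite !inE; apply: contraTneq => ->; exact: e_irr.
apply: leq_ltn_trans (subset_leq_card sub) _.
by rewrite cardsC1 card_ord ltn_predL (leq_ltn_trans _ (ltn_ord i)).
Qed.

Theorem corollary3 (R : realType) (n : nat) (e : rel 'I_n) (q : R) :
  (0 < n)%N -> simple_graph e -> triangle_free e ->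
  smallest_eigenvalue (signless_laplacian R e) q ->
  q < 2 * n%:R / 9.
Proof.
move=> n_gt0 [e_sym e_irr] e_tf [_ q_min].
have [/= v _ v_max] := @arg_maxnP _ (Ordinal n_gt0) xpredT (deg e) isT.
have := symmetric_rayleigh_lower (star_vector R e v)
  (signless_laplacian_tr R e_sym) q_min.
rewrite star_vector_norm // star_vector_form //.
set N : R := n%:R; set D : R := (deg e v)%:R; set S : R := \sum_j _ => rayleigh.
have S_le_ND : S <= N * D.
  have -> : N * D = \sum_(j < n) D by rewrite sumr_const card_ord mulr_natl.
  by apply: ler_sum => j _; rewrite ler_nat v_max.
have S_le_NN : S + N <= N * N.
  have -> : N * N = \sum_(j < n) N by rewrite sumr_const card_ord mulr_natl.
  have -> : S + N = \sum_j ((deg e j)%:R + 1) by rewrite big_split /= sumr_const card_ord.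
  by apply: ler_sum => j _; rewrite natr1 ler_nat deg_lt.
have N_ge1 : 1 <= N by rewrite ler1n.
have D_ge0 : 0 <= D by rewrite ler0n.
have nD_gt0 : 0 < N + 8 * D by lra.
rewrite ltr_pdivlMr //.
nra.
Qed.
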